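(* Let $d_1$ be a positive integer, let $p_{10}<p_{11}<\cdots<p_{1d_1}$ and $p_{20}<p_{21}$ be real numbers (so $d_2=1$), and let $$S=\bigl\{(x_1,x_2,\mu)\in\mathbb{R}^2\times\mathbb{R} : \mu=x_1x_2,\ x_1\in\{p_{10},\dots,p_{1d_1}\},\ x_2\in\{p_{20},p_{21}\}\bigr\}.$$ Consider the set $E$ of all $(x_1,x_2,\mu,\boldsymbol{z}_1,z_{21})\in\mathbb{R}^2\times\mathbb{R}\times\{0,1\}^{d_1}\times\{0,1\}$ with $\boldsymbol{z}_1=(z_{11},\dots,z_{1d_1})$ satisfying $x_1=p_{10}+\sum_{j=1}^{d_1}(p_{1j}-p_{1,j-1})z_{1j}$, $1\ge z_{11}\ge z_{12}\ge\cdots\ge z_{1d_1}\ge 0$, $x_2=p_{20}+(p_{21}-p_{20})z_{21}$, $1\ge z_{21}\ge 0$, and the four inequalities \begin{align*} \mu&\le p_{10}p_{20}+p_{10}(p_{21}-p_{20})z_{21}+\textstyle\sum_{j=1}^{d_1}p_{21}(p_{1j}-p_{1,j-1})z_{1j},\\ \mu&\le p_{10}p_{20}+\textstyle\sum_{j=1}^{d_1}p_{20}(p_{1j}-p_{1,j-1})z_{1j}+p_{1d_1}(p_{21}-p_{20})z_{21},\\ \mu&\ge p_{10}p_{21}+p_{10}(p_{20}-p_{21})(1-z_{21})+\textstyle\sum_{j=1}^{d_1}p_{20}(p_{1j}-p_{1,j-1})z_{1j},\\ \mu&\ge p_{10}p_{21}+\textstyle\sum_{j=1}^{d_1}p_{21}(p_{1j}-p_{1,j-1})z_{1j}+p_{1d_1}(p_{20}-p_{21})(1-z_{21}).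 \end{align*} Then $E$ is an MIP formulation of $S$, i.e., the projection of $E$ onto the $(x_1,x_2,\mu)$ variables equals $S$.
   Context: An MIP formulation of a set $S\subseteq\mathbb{R}^k$ is a set of the form $E=\{(\boldsymbol{x},\boldsymbol{y},\boldsymbol{z})\in Q:\boldsymbol{z}\in\{0,1\}^q\}$, with $Q$ a polyhedron, whose projection onto the $\boldsymbol{x}$-variables equals $S$. *)

From HB Require Import structures.
From mathcomp Require Import all_boot all_order all_algebra.
Set Implicit Arguments. Unset Strict Implicit. Unset Printing Implicit Defensive.
Import Order.TTheory GRing.Theory Num.Theory.
Local Open Scope ring_scope.

Definition S_set (R : realFieldType) (d1 : nat) (p1 : nat -> R) (p20 p21 : R)
  (x1 x2 mu : R) : Prop :=
  mu = x1 * x2 /\ (exists j : nat, (j <= d1)%N /\ x1 = p1 j) /\ (x2 = p20 \/ x2 = p21).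

(* The set E (binary variables z1 j, j = 1..d1, and z21 take values in {0,1}).
   Only the values z1 1, ..., z1 d1 of z1 : nat -> R are used. *)
Definition E_set (R : realFieldType) (d1 : nat) (p1 : nat -> R) (p20 p21 : R)
  (x1 x2 mu : R) (z1 : nat -> R) (z21 : R) : Prop :=
  (forall j, (1 <= j <= d1)%N -> z1 j = 0 \/ z1 j = 1) /\
  (z21 = 0 \/ z21 = 1) /\
  x1 = p1 0%N + \sum_(1 <= j < d1.+1) (p1 j - p1 j.-1) * z1 j /\
  (1 >= z1 1%N) /\
  (forall j, (1 <= j < d1)%N -> z1 j >= z1 j.+1) /\
  (z1 d1 >= 0) /\
  x2 = p20 + (p21 - p20) * z21 /\
  (1 >= z21) /\ (z21 >= 0) /\
  mu <= p1 0%N * p20 + p1 0%N * (p21 - p20) * z21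
        + \sum_(1 <= j < d1.+1) p21 * (p1 j - p1 j.-1) * z1 j /\
  mu <= p1 0%N * p20 + \sum_(1 <= j < d1.+1) p20 * (p1 j - p1 j.-1) * z1 j
        + p1 d1 * (p21 - p20) * z21 /\
  mu >= p1 0%N * p21 + p1 0%N * (p20 - p21) * (1 - z21)
        + \sum_(1 <= j < d1.+1) p20 * (p1 j - p1 j.-1) * z1 j /\
  mu >= p1 0%N * p21 + \sum_(1 <= j < d1.+1) p21 * (p1 j - p1 j.-1) * z1 j
        + p1 d1 * (p20 - p21) * (1 - z21).

From HB Require Import structures.
From mathcomp Require Import all_boot all_order all_algebra.
From mathcomp Require Import ring lra zify.
Set Implicit Arguments. Unset Strict Implicit. Unset Printing Implicit Defensive.
Import Order.TTheory GRing.Theory Num.Theory.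
Local Open Scope ring_scope.

(* A binary vector z1 obeying the chain 1 >= z11 >= ... >= z1d1 >= 0 is a
   staircase (ones up to some k, zeros after), so the telescoping sum gives
   x1 = p1k; conversely every k yields such a staircase.  After substituting
   x1 and x2, the four inequalities on mu are the McCormick envelopes of
   x1 x2 over the box [p10, p1d1] x [p20, p21].  They hold for mu = x1 x2 on
   the box, and when x2 is an endpoint p20 or p21 one lower and one upper
   envelope both equal x1 x2, which forces mu = x1 x2. *)

Section McCormick.
Variables (R : realFieldType) (a b c d : R).

Definition mccormick (x y mu : R) : Prop :=
  [/\ a * y + c * x - a * c <= mu, b * y + d * x - b * d <= mu,
      mu <= a * y + d * x - a * d & mu <= b * y + c * x - b * c].

Lemma mccormick_mul x y : a <= x <= b -> c <= y <= d -> mccormick x y (x * y).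
Proof. by move=> /andP[ax xb] /andP[cy yd]; split; nra. Qed.

Lemma mccormick_eq_mul x y mu : y = c \/ y = d -> mccormick x y mu -> mu = x * y.
Proof. by case=> -> [? ? ? ?]; apply/eqP; rewrite eq_le; apply/andP; split; lra. Qed.

End McCormick.

Lemma sumr_mulA (R : pzRingType) (c : R) (F G : nat -> R) m n :
  \sum_(m <= j < n) c * F j * G j = c * \sum_(m <= j < n) F j * G j.
Proof. by rewrite mulr_sumr; apply: eq_bigr => j _; rewrite mulrA. Qed.

Section Staircase.
Variable R : realFieldType.
Implicit Types (p z : nat -> R).

Definition staircase (k j : nat) : R := (j <= k)%:R.

Lemma staircase_bin k j : staircase k j = 0 \/ staircase k j = 1.
Proof. by rewrite /staircase; case: (j <= k)%N; [right | left]. Qed.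

Lemma staircase_le1 k j : staircase k j <= 1.
Proof. by case: (staircase_bin k j) => ->; rewrite ?ler01. Qed.

Lemma staircase_nonincreasing k j : staircase k j.+1 <= staircase k j.
Proof. by rewrite /staircase ler_nat; case: leqP => // /ltnW ->. Qed.

Lemma telescope_staircase p n k : (k <= n)%N ->
  \sum_(1 <= j < n.+1) (p j - p j.-1) * staircase k j = p k - p 0.
Proof.
move=> kn; rewrite (@big_cat_nat _ _ _ k.+1) ?ltnS //=.
rewrite [X in _ + X]big_nat_cond [X in _ + X]big1 => [|j /andP[/andP[kj _] _]]; last first.
  by rewrite /staircase leqNgt kj mulr0.
rewrite addr0 big_add1 /= -(telescope_sumr p (leq0n k)).
by apply: eq_big_nat => j /andP[_ jk]; rewrite /staircase jk mulr1.
Qed.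

Lemma binary_nonincreasing_staircase z n :
  (forall j, (1 <= j <= n)%N -> z j = 0 \/ z j = 1) ->
  (forall j, (1 <= j < n)%N -> z j.+1 <= z j) ->
  exists2 k, (k <= n)%N & forall j, (1 <= j <= n)%N -> z j = staircase k j.
Proof.
elim: n => [|n IH] z_bin z_noninc; first by exists 0%N => // j; lia.
have [k kn zE] : exists2 k, (k <= n)%N & forall j, (1 <= j <= n)%N -> z j = staircase k j.
  by apply: IH => j j_range; [apply: z_bin | apply: z_noninc]; lia.
have [z_last|z_last] := z_bin n.+1 (leqnn _).
  exists k => [|j /andP[j1]]; first lia.
  rewrite leq_eqVlt => /orP[/eqP->|]; last by rewrite ltnS => jn; apply: zE; lia.
  by rewrite z_last /staircase ltnNge kn.
have k_eq_n : k = n.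
  case: (posnP n) => [n0|n_gt0]; first lia.
  have : 1 <= z n by rewrite -z_last; apply: z_noninc; lia.
  rewrite zE /staircase; last lia.
  case: leqP => [nk _|_ /=]; first lia.
  by rewrite ler10.
exists n.+1 => // j /andP[j1]; rewrite leq_eqVlt => /orP[/eqP->|].
  by rewrite z_last /staircase leqnn.
rewrite ltnS => jn; rewrite zE; last lia.
by rewrite /staircase k_eq_n jn (leqW jn).
Qed.

Lemma increasing_le_range p d : (forall j, (j < d)%N -> p j < p j.+1) ->
  forall k, (k <= d)%N -> p 0 <= p k <= p d.
Proof.
move=> p_incr k kd.
have p_homo : {in [pred i | (i <= d)%N] &, {homo p : i j / (i <= j)%N >-> i <= j}}.
  apply: homo_leq_in => [x|y x z|i j _ jd m|i _].
  - exact: lexx.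
  - exact: le_trans.
  - by move: jd; rewrite !inE; lia.
  - by rewrite inE => /p_incr /ltW.
by rewrite !p_homo ?inE.
Qed.

End Staircase.

Arguments staircase {R} k j.

Section Formulation.
Variables (R : realFieldType) (d : nat) (p : nat -> R) (p20 p21 : R).

Lemma E_inequalities_mccormick (x1 x2 mu s z21 : R) :
  x1 = p 0 + s -> x2 = p20 + (p21 - p20) * z21 ->
  (mu <= p 0 * p20 + p 0 * (p21 - p20) * z21 + p21 * s /\
   mu <= p 0 * p20 + p20 * s + p d * (p21 - p20) * z21 /\
   mu >= p 0 * p21 + p 0 * (p20 - p21) * (1 - z21) + p20 * s /\
   mu >= p 0 * p21 + p21 * s + p d * (p20 - p21) * (1 - z21)) <->
  mccormick (p 0) (p d) p20 p21 x1 x2 mu.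
Proof.
by move=> -> ->; split=> [[? [? [? ?]]] | [? ? ? ?]]; do ?split; lra.
Qed.

Lemma staircase_E_set k z21 :
  (k <= d)%N -> p 0 <= p k <= p d -> p20 <= p21 -> (z21 = 0 \/ z21 = 1) ->
  let x2 := p20 + (p21 - p20) * z21 in
  E_set d p p20 p21 (p k) x2 (p k * x2) (staircase k) z21.
Proof.
move=> kd pk_range p2_le z21_bin x2.
have x2_range : p20 <= x2 <= p21 by rewrite /x2; case: z21_bin => ->; apply/andP; split; lra.
have [] := @E_inequalities_mccormick (p k) x2 (p k * x2) (p k - p 0) z21 _ erefl.
  by rewrite addrC subrK.
move=> _ /(_ (mccormick_mul pk_range x2_range)) ineqs.
rewrite /E_set !sumr_mulA telescope_staircase //.
do 9?split => //.
- by move=> j _; exact: staircase_bin.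
- by rewrite addrC subrK.
- exact: staircase_le1.
- by move=> j _; exact: staircase_nonincreasing.
- by case: z21_bin => ->; lra.
- by case: z21_bin => ->; lra.
Qed.

Lemma E_set_sub_S_set x1 x2 mu z1 z21 :
  E_set d p p20 p21 x1 x2 mu z1 z21 -> S_set d p p20 p21 x1 x2 mu.
Proof.
case=> z1_bin [z21_bin [x1E [_ [z1_noninc [_ [x2E [_ [_ ineqs]]]]]]]].
have [k kd z1E] := binary_nonincreasing_staircase z1_bin z1_noninc.
have sumE : \sum_(1 <= j < d.+1) (p j - p j.-1) * z1 j = p k - p 0.
  rewrite -(telescope_staircase p kd); apply: eq_big_nat => j j_range.
  by rewrite z1E.
move: ineqs; rewrite !sumr_mulA => /(E_inequalities_mccormick _ x1E x2E) mc.
have x2_vertex : x2 = p20 \/ x2 = p21.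
  by rewrite x2E; case: z21_bin => ->; [left | right]; ring.
split; [exact: mccormick_eq_mul x2_vertex mc | split => //].
by exists k; rewrite x1E sumE addrC subrK.
Qed.

End Formulation.

Theorem proposition1 (R : realFieldType) (d1 : nat) (p1 : nat -> R) (p20 p21 : R) :
  (0 < d1)%N ->
  (forall j : nat, (j < d1)%N -> p1 j < p1 j.+1) ->
  p20 < p21 ->
  forall x1 x2 mu : R,
    S_set d1 p1 p20 p21 x1 x2 mu <->
    exists (z1 : nat -> R) (z21 : R), E_set d1 p1 p20 p21 x1 x2 mu z1 z21.
Proof.
move=> _ p1_incr p2_lt x1 x2 mu; split; last by case=> z1 [z21 /E_set_sub_S_set].
case=> -> [[k [kd ->]] x2_vertex].
have [z21 z21_bin ->] : exists2 z21 : R, (z21 = 0 \/ z21 = 1) & x2 = p20 + (p21 - p20) * z21.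
  by case: x2_vertex => ->; [exists 0; [left | ring] | exists 1; [right | ring]].
exists (staircase k), z21; apply: staircase_E_set => //; last exact: ltW.
exact: increasing_le_range.
Qed.
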